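(* For any positive integer $r$, $\mathrm{NCQSym}^r(\mathbf{x})$ is a Hopf algebra, namely a Hopf subalgebra of $\mathrm{NCQSym}(\mathbf{x})$ with product and coproduct inherited from $\mathrm{NCQSym}(\mathbf{x})$.
   Context: Let $\mathbf{x}=\mathbf{x}_1,\mathbf{x}_2,\dots$ be noncommuting variables. A set composition $\Phi=(\Phi_1|\cdots|\Phi_k)$ of a finite set $A$ is an ordered list of disjoint nonempty sets with union $A$; a set partition $\Pi=\Pi_1/\cdots/\Pi_l$ is an unordered such collection. $\mathrm{NCQSym}(\mathbf{x})$ is the set of bounded-degree formal power series $f$ in $\mathbf{x}$ such that for every set composition $\Phi$ of $[n]$ all monomials $\mathbf{x}_{i_1}\cdots\mathbf{x}_{i_n}$ with $i_j=i_\ell$ whenever $j,\ell$ lie in the same block and $i_j<i_\ell$ whenever $j\in\Phi_p,\ell\in\Phi_q$, $p<q$, have the same coefficient. Its product is multiplication of series; its coproduct is: evaluate $f$ on the ordered alphabet $\mathbf{x}_1<\mathbf{x}_2<\cdots<\mathbf{y}_1<\mathbf{y}_2<\cdots$, impose $\mathbf{x}_i\mathbf{y}_j=\mathbf{y}_j\mathbf{x}_i$ for all $i,j$, view the result as $\sum f_1(\mathbf{x})\otimes f_2(\mathbf{y})\in\mathrm{NCQSym}(\mathbf{x})\otimes\mathrm{NCQSym}(\mathbf{y})$ and replace $\mathbf{y}$ by $\mathbf{x}$. For a positive integer $r$, an $r$-set-composition of $[n]$ is a pair $(\Phi,\Pi)$ where $\Phi$ is a set composition of some $A\subseteq[n]$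 all of whose blocks have size $\ge r$ and $\Pi$ is a set partition of $[n]\setminus A$ all of whose blocks have size $<r$. Define $\mathbf{M}_{(\Phi,\Pi)}=\sum\mathbf{x}_{i_1}\cdots\mathbf{x}_{i_n}$ over all tuples with $i_j=i_k$ if and only if $j,k$ lie in the same block of $\Phi$ or of $\Pi$, and $i_j<i_k$ whenever $j\in\Phi_l$, $k\in\Phi_m$, $l<m$. Let $\mathrm{NCQSym}^r_n(\mathbf{x})$ be the $\mathbb{Q}$-span of $\{\mathbf{M}_{(\Phi,\Pi)}\}$ over $r$-set-compositions of $[n]$, and $\mathrm{NCQSym}^r(\mathbf{x})=\bigoplus_{n\ge0}\mathrm{NCQSym}^r_n(\mathbf{x})$. *)

From mathcomp Require Import all_boot all_order all_algebra.
From Stdlib Require List.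
Set Implicit Arguments. Unset Strict Implicit. Unset Printing Implicit Defensive.
Import GRing.Theory.

(* Formal power series in noncommuting variables x_0 < x_1 < x_2 < ...       *)
(* (the paper's x_1 < x_2 < ... relabelled order-isomorphically), with       *)
(* rational coefficients: a series is its coefficient function on words.     *)
(* The word x_{i_1} ... x_{i_n} is the sequence [:: i_1; ...; i_n].          *)
Definition series := seq nat -> rat.

Definition bounded (f : series) : Prop :=
  exists N : nat, forall w : seq nat, (N < size w)%N -> f w = 0%R.

Definition mul_s (f g : series) : series := fun w =>
  (\sum_(i < (size w).+1) f (take i w) * g (drop i w))%R.

Definition one_s : series := fun w => if w is [::] then 1%R else 0%R.

(* positions 1..n of a word are the elements of 'I_n (0-based)               *)

Definition is_setcomp n (A : {set 'I_n}) (Phi : seq {set 'I_n}) : Prop :=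
  [/\ forall B, List.In B Phi -> B != set0,
      \bigcup_(B <- Phi) B = A
    & forall i j, (i < j < size Phi)%N -> [disjoint nth set0 Phi i & nth set0 Phi j]].

Definition compatible n (Phi : seq {set 'I_n}) (w : seq nat) : Prop :=
  forall (p q : nat) (j k : 'I_n), (p < size Phi)%N -> (q < size Phi)%N ->
    j \in nth set0 Phi p -> k \in nth set0 Phi q ->
    (p = q -> nth 0%N w j = nth 0%N w k) /\ ((p < q)%N -> (nth 0%N w j < nth 0%N w k)%N).

Definition in_NCQSym (f : series) : Prop :=
  bounded f /\
  forall n (Phi : seq {set 'I_n}), is_setcomp [set: 'I_n] Phi ->
    forall w w' : seq nat, size w = n -> size w' = n ->
      compatible Phi w -> compatible Phi w' -> f w = f w'.

Definition r_setcomp (r n : nat) (Phi : seq {set 'I_n}) (Pi : {set {set 'I_n}}) : Prop :=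
  let A := \bigcup_(B <- Phi) B in
  [/\ is_setcomp A Phi,
      forall B, List.In B Phi -> (r <= #|B|)%N,
      partition Pi (~: A)
    & forall B, B \in Pi -> (#|B| < r)%N].

Definition same_block n (Phi : seq {set 'I_n}) (Pi : {set {set 'I_n}}) (j k : 'I_n) : bool :=
  has (fun B : {set 'I_n} => (j \in B) && (k \in B)) Phi || [exists B in Pi, (j \in B) && (k \in B)].

Definition Mser n (Phi : seq {set 'I_n}) (Pi : {set {set 'I_n}}) : series := fun w =>
  if (size w == n) &&
     [forall j : 'I_n, forall k : 'I_n,
        ((nth 0%N w j == nth 0%N w k) == same_block Phi Pi j k) &&
        [forall p : 'I_(size Phi), forall q : 'I_(size Phi),
           [&& (p < q)%N, j \in nth set0 Phi p & k \in nth set0 Phi q] ==>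
           (nth 0%N w j < nth 0%N w k)%N]]
  then 1%R else 0%R.

Definition hom (n : nat) (f : series) : series := fun w =>
  if size w == n then f w else 0%R.

Definition in_NCQSymr (r : nat) (f : series) : Prop :=
  bounded f /\
  forall n : nat, exists c : seq ((seq {set 'I_n} * {set {set 'I_n}}) * rat),
    (forall p, List.In p c -> r_setcomp r p.1.1 p.1.2) /\
    forall w, hom n f w = (\sum_(p <- c) p.2 * Mser p.1.1 p.1.2 w)%R.

(* Iterated coproduct: evaluation on k ordered alphabets                      *)
(*   x^(0) < x^(1) < ... < x^(k-1)  (each alphabet itself ordered),           *)
(* letters of different alphabets commuting.  An element of the k-fold       *)
(* tensor power is identified with its coefficient function on k-tuples of    *)
(* words (us = [:: u_0; ...; u_(k-1)], u_i a word in the alphabet x^(i)).     *)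
(* The coefficient of the class (u_0,...,u_(k-1)) is the sum of the          *)
(* coefficients of all words z in the union alphabet with x^(i)-subword u_i   *)
(* (z is given by the colour sequence c).  The coefficient of such a z in    *)
(* f evaluated on the ordered union alphabet is the coefficient in f of the   *)
(* order-isomorphic x-word obtained by sending the letter a of x^(i) to       *)
(* a + i * B, with B larger than every letter occurring.  For k = 2 this is   *)
(* the coproduct of NCQSym(x) described in the paper.                         *)
Definition cop (f : series) (us : seq (seq nat)) : rat :=
  let k := size us in
  let n := sumn (map size us) in
  let B := (sumn (map sumn us)).+1 in
  (\sum_(c : n.-tuple 'I_k |
          [forall i : 'I_k, count (pred1 i) c == size (nth [::] us i)])
     f (mkseq (fun p =>
          let cs := map (@nat_of_ord k) c in
          let i := nth 0%N cs p in
          nth 0%N (nth [::] us i) (count (pred1 i) (take p cs)) + i * B)%N n))%R.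

Definition coprod (f : series) (u v : seq nat) : rat := cop f [:: u; v].

Definition in_tensor2 (P : series -> Prop) (F : seq nat -> seq nat -> rat) : Prop :=
  exists gs : seq (series * series),
    (forall p, List.In p gs -> P p.1 /\ P p.2) /\
    forall u v, F u v = (\sum_(p <- gs) p.1 u * p.2 v)%R.

(* Antipode of the graded connected bialgebra NCQSym(x) (Takeuchi formula):   *)
(*   S = sum_k (-1)^k m^(k-1) (id - eta eps)^(x k) Delta^(k-1).               *)
(* cuts x w b splits the nonempty word x :: w into consecutive nonempty       *)
(* factors, cutting after position i+1 when b_i is true.                      *)
Fixpoint cuts (x : nat) (w : seq nat) (b : seq bool) : seq (seq nat) :=
  match w, b with
  | y :: w', c :: b' =>
      let ps := cuts y w' b' in
      if c then [:: x] :: ps else (x :: head [::] ps) :: behead ps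
  | _, _ => [:: [:: x]]
  end.

Definition antipode (f : series) : series := fun w =>
  match w with
  | [::] => f [::]
  | x :: w' =>
      (\sum_(b : (size w').-tuple bool)
         (-1) ^+ size (cuts x w' b) * cop f (cuts x w' b))%R
  end.

From Pilot Require Import Defs.
From mathcomp Require Import all_boot all_order all_algebra.
From Stdlib Require List.
From mathcomp Require Import zify ring.
Set Implicit Arguments. Unset Strict Implicit. Unset Printing Implicit Defensive.
Import GRing.Theory Num.Theory.

(* Call words w and t r-equivalent when they have the same length, carry equal
   letters at the same pairs of positions, and order in the same way the
   letters occurring at least r times.  Every block of an r-set-composition
   has at least r elements, so M_(Phi,Pi) is constant on r-classes;
   conversely the r-class of a word t is exactly the support of one
   M_(Phi,Pi): Phi lists the level sets of the frequent letters of t in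
   increasing order and Pi collects the level sets of the rare ones.  Hence,
   for r > 0, NCQSym^r consists of the bounded series constant on r-classes.
   This invariance passes to factors of words (product, antipode) and to the
   shuffles of words over ordered alphabets with disjoint letter ranges that
   compute coproducts; a coproduct coefficient, being invariant in each of its
   two words, expands over indicators of finitely many pairs of r-classes. *)

Definition eq_pattern (w t : seq nat) : Prop :=
  forall j k, j < size w -> k < size w ->
    (nth 0 w j == nth 0 w k) = (nth 0 t j == nth 0 t k).

Definition requiv (r : nat) (w t : seq nat) : Prop :=
  size w = size t /\
  forall j k, j < size w -> k < size w ->
    (nth 0 w j == nth 0 w k) = (nth 0 t j == nth 0 t k) /\
    (r <= count_mem (nth 0 w j) w -> r <= count_mem (nth 0 w k) w ->
       (nth 0 w j < nth 0 w k) = (nth 0 t j < nth 0 t k)).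

Definition rinvariant (r : nat) (f : series) : Prop :=
  bounded f /\ forall w t, requiv r w t -> f w = f t.

Lemma count_mem_iota (w : seq nat) x :
  count_mem x w = count (fun j => nth 0 w j == x) (iota 0 (size w)).
Proof. by rewrite -{1}(mkseq_nth 0 w) /mkseq count_map. Qed.

Lemma eq_pattern_count_mem w t j : size w = size t -> eq_pattern w t ->
  j < size w -> count_mem (nth 0 w j) w = count_mem (nth 0 t j) t.
Proof.
move=> es E hj; rewrite !count_mem_iota -es.
by apply: eq_in_count => k; rewrite mem_iota /= => hk; apply: E.
Qed.

Section REquiv.

Variable r : nat.

Lemma requiv_eq_pattern w t : requiv r w t -> eq_pattern w t.
Proof. by move=> [_ H] j k hj hk; case: (H j k hj hk). Qed.

Lemma requiv_count_mem w t j : requiv r w t -> j < size w ->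
  count_mem (nth 0 w j) w = count_mem (nth 0 t j) t.
Proof. by move=> H; apply: eq_pattern_count_mem; [case: H | exact: requiv_eq_pattern]. Qed.

Lemma requiv_refl w : requiv r w w.
Proof. by split=> // j k _ _. Qed.

Lemma requiv_sym w t : requiv r w t -> requiv r t w.
Proof.
move=> H; have [es B] := H; split=> // j k; rewrite -es => hj hk.
have [E L] := B j k hj hk; split=> //.
by rewrite -!(requiv_count_mem H) // => lj lk; rewrite L.
Qed.

Lemma requiv_trans w t u : requiv r w t -> requiv r t u -> requiv r w u.
Proof.
move=> H1 H2; have [e1 B1] := H1; have [e2 B2] := H2.
split; first by rewrite e1.
move=> j k hj hk; have [E1 L1] := B1 j k hj hk.
rewrite e1 in hj hk; have [E2 L2] := B2 j k hj hk.
split; first by rewrite E1 E2.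
move=> lj lk; rewrite L1 // L2 // -(requiv_count_mem H1) //; by rewrite e1.
Qed.

Lemma count_mem_map_nth (w s : seq nat) x : uniq s -> all (gtn (size w)) s ->
  count_mem x (map (nth 0 w) s) <= count_mem x w.
Proof.
move=> us als; rewrite [X in _ <= X]count_mem_iota count_map -!size_filter.
apply: uniq_leq_size; first exact: filter_uniq.
by move=> y; rewrite !mem_filter mem_iota /= => /andP [-> ys]; exact: (allP als).
Qed.

Lemma requiv_map_nth w t s : requiv r w t -> uniq s -> all (gtn (size w)) s ->
  requiv r (map (nth 0 w) s) (map (nth 0 t) s).
Proof.
move=> [es B] us als; split; first by rewrite !size_map.
rewrite size_map => j k hj hk; rewrite !(nth_map 0) //.
have [E L] := B _ _ (allP als _ (mem_nth 0 hj)) (allP als _ (mem_nth 0 hk)).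
split=> // lj lk; apply: L.
- exact: leq_trans lj (count_mem_map_nth _ us als).
- exact: leq_trans lk (count_mem_map_nth _ us als).
Qed.

Lemma requiv_take w t i : requiv r w t -> requiv r (take i w) (take i t).
Proof.
move=> H; have [es _] := H.
rewrite -(mkseq_nth 0 w) -(mkseq_nth 0 t) /mkseq -!map_take -es.
apply: requiv_map_nth => //; first by rewrite take_uniq ?iota_uniq.
by apply/allP => x /mem_take; rewrite mem_iota.
Qed.

Lemma requiv_drop w t i : requiv r w t -> requiv r (drop i w) (drop i t).
Proof.
move=> H; have [es _] := H.
rewrite -(mkseq_nth 0 w) -(mkseq_nth 0 t) /mkseq -!map_drop -es.
apply: requiv_map_nth => //; first by rewrite drop_uniq ?iota_uniq.
by apply/allP => x /mem_drop; rewrite mem_iota.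
Qed.

Lemma requiv_nth_flatten ss ss' i : shape ss = shape ss' ->
  requiv r (flatten ss) (flatten ss') -> requiv r (nth [::] ss i) (nth [::] ss' i).
Proof.
move=> esh H; rewrite -(flattenK ss) -(flattenK ss') !nth_reshape esh.
exact/requiv_take/requiv_drop.
Qed.

End REquiv.

Lemma flatten_cuts x w b : size b = size w -> flatten (cuts x w b) = x :: w.
Proof.
elim: w x b => [|y w IH] x [|c b] //= [eb]; have := IH y b eb.
by case: c; case: (cuts y w b) => //= p ps <-.
Qed.

Lemma shape_cuts x x' w w' b : size b = size w -> size w' = size w ->
  shape (cuts x w b) = shape (cuts x' w' b).
Proof.
elim: w x x' w' b => [|y w IH] x x' [|y' w'] [|c b] //= [eb] [ew].
have := IH y y' w' b eb ew; case: c => /=; first by move=> ->.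
by case: (cuts y w b) => [|p ps]; case: (cuts y' w' b) => [|p' ps'] //= [-> ->].
Qed.

Lemma nth_leq_sumn s j : nth 0 s j <= sumn s.
Proof.
elim: s j => [|a s IH] [|j] //=; first exact: leq_addr.
exact: leq_trans (IH j) (leq_addl _ _).
Qed.

Lemma sumn_nth_leq ss i : sumn (nth [::] ss i) <= sumn (map sumn ss).
Proof.
elim: ss i => [|a s IH] [|j] //=; first exact: leq_addr.
exact: leq_trans (IH j) (leq_addl _ _).
Qed.

Lemma ltn_shift x y i j B : x < B -> y < B ->
  (x + i * B < y + j * B) = (i < j) || ((i == j) && (x < y)).
Proof.
move=> hx hy; case: (ltngtP i j) => [ij|ij|->] /=; last by rewrite ltn_add2r.
- have : i.+1 * B <= j * B by rewrite leq_mul2r ij orbT.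
  by rewrite mulSn; lia.
- have : j.+1 * B <= i * B by rewrite leq_mul2r ij orbT.
  by rewrite mulSn; lia.
Qed.

Lemma eqn_shift x y i j B : x < B -> y < B ->
  (x + i * B == y + j * B) = (i == j) && (x == y).
Proof.
move=> hx hy; case: (ltngtP i j) => [ij|ij|->] /=; last by rewrite eqn_add2r.
- by apply: ltn_eqF; rewrite ltn_shift // ij.
- by apply: gtn_eqF; rewrite ltn_shift // ij.
Qed.

Definition rank_at (cs : seq nat) p := count_mem (nth 0 cs p) (take p cs).

Definition letter_at (us : seq (seq nat)) cs p :=
  nth 0 (nth [::] us (nth 0 cs p)) (rank_at cs p).

Definition shuffle (us : seq (seq nat)) B (cs : seq nat) n : seq nat :=
  mkseq (fun p => letter_at us cs p + nth 0 cs p * B) n.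

Definition colouring (us : seq (seq nat)) (cs : seq nat) :=
  all (gtn (size us)) cs /\
  forall i, i < size us -> count_mem i cs = size (nth [::] us i).

Lemma copE f us : cop f us =
  (\sum_(c : (sumn (map size us)).-tuple 'I_(size us) |
          [forall i, count_mem i c == size (nth [::] us i)])
     f (shuffle us (sumn (map sumn us)).+1 (map val c) (sumn (map size us))))%R.
Proof. by []. Qed.

Lemma nth_shuffle us B cs p : p < size cs ->
  nth 0 (shuffle us B cs (size cs)) p = letter_at us cs p + nth 0 cs p * B.
Proof. by move=> hp; rewrite nth_mkseq. Qed.

Lemma rank_at_lt us cs p : colouring us cs -> p < size cs ->
  rank_at cs p < size (nth [::] us (nth 0 cs p)).
Proof.
move=> [hall hcnt] hp; rewrite -hcnt; last exact: (allP hall _ (mem_nth 0 hp)).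
have -> : count_mem (nth 0 cs p) cs =
    count_mem (nth 0 cs p) (take p.+1 cs) + count_mem (nth 0 cs p) (drop p.+1 cs).
  by rewrite -count_cat cat_take_drop.
by rewrite (take_nth 0 hp) -cats1 !count_cat /= eqxx addn0 addn1 addSn ltnS leq_addr.
Qed.

Lemma letter_at_lt us cs B p : (forall i, i < size us -> sumn (nth [::] us i) < B) ->
  colouring us cs -> p < size cs -> letter_at us cs p < B.
Proof.
move=> hB [hall _] hp; apply: leq_ltn_trans (nth_leq_sumn _ _) (hB _ _).
exact: (allP hall _ (mem_nth 0 hp)).
Qed.

Lemma rank_at_occurrences (i : nat) cs :
  [seq count_mem i (take p cs) | p <- [seq p <- iota 0 (size cs) | nth 0 cs p == i]]
  = iota 0 (count_mem i cs).
Proof.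
elim/last_ind: cs => [|cs x IH] //.
rewrite size_rcons -addn1 iotaD filter_cat map_cat.
have -> : [seq p <- iota 0 (size cs) | nth 0 (rcons cs x) p == i]
        = [seq p <- iota 0 (size cs) | nth 0 cs p == i].
  by apply: eq_in_filter => p; rewrite mem_iota /= => hp; rewrite nth_rcons hp.
set P := [seq p <- _ | _].
have -> : [seq count_mem i (take p (rcons cs x)) | p <- P]
        = [seq count_mem i (take p cs) | p <- P].
  apply/eq_in_map => p; rewrite mem_filter mem_iota /= => /andP [_ hp].
  by rewrite -cats1 takel_cat // ltnW.
rewrite IH /= add0n nth_rcons ltnn eqxx -cats1 count_cat /= addn0.
case: (x == i) => /=; last by rewrite addn0 cats0.
by rewrite take_size_cat // addn1 -addn1 iotaD.
Qed.

Section Shuffle.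

Variables (us : seq (seq nat)) (B : nat) (cs : seq nat).
Hypothesis hB : forall i, i < size us -> sumn (nth [::] us i) < B.
Hypothesis hcs : colouring us cs.

Lemma count_mem_shuffle p : p < size cs ->
  count_mem (nth 0 (shuffle us B cs (size cs)) p) (shuffle us B cs (size cs))
  = count_mem (letter_at us cs p) (nth [::] us (nth 0 cs p)).
Proof.
move=> hp; have [hall hcnt] := hcs.
set c := nth 0 cs p; set L := letter_at us cs p.
rewrite count_mem_iota size_mkseq.
transitivity
  (count (fun q => (nth 0 cs q == c) && (letter_at us cs q == L)) (iota 0 (size cs))).
  apply: eq_in_count => q; rewrite mem_iota /= => hq.
  by rewrite !nth_shuffle // eqn_shift ?(letter_at_lt hB hcs) // eq_sym [L == _]eq_sym.
transitivity
  (count (fun q => letter_at us cs q == L) [seq q <- iota 0 (size cs) | nth 0 cs q == c]).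
  by rewrite count_filter; apply: eq_count => q /=; rewrite andbC.
transitivity (count (fun a => nth 0 (nth [::] us c) a == L)
   [seq count_mem c (take q cs) | q <- [seq q <- iota 0 (size cs) | nth 0 cs q == c]]).
  rewrite count_map; apply: eq_in_count => q; rewrite mem_filter => /andP [/eqP hq _].
  by rewrite /= /letter_at /rank_at hq.
rewrite rank_at_occurrences hcnt; last exact: (allP hall _ (mem_nth 0 hp)).
by rewrite count_mem_iota.
Qed.

End Shuffle.

Lemma requiv_shuffle r us us' B B' cs n : size cs = n -> size us' = size us ->
  colouring us cs ->
  (forall i, i < size us -> requiv r (nth [::] us i) (nth [::] us' i)) ->
  (forall i, i < size us -> sumn (nth [::] us i) < B) ->
  (forall i, i < size us' -> sumn (nth [::] us' i) < B') ->
  requiv r (shuffle us B cs n) (shuffle us' B' cs n).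
Proof.
move=> <- hs hcs hR hB hB'; have [hall hcnt] := hcs.
have hcs' : colouring us' cs.
  split=> [|i]; rewrite hs // => hi.
  by rewrite hcnt //; case: (hR i hi).
split; first by rewrite !size_mkseq.
move=> j k; rewrite size_mkseq => hj hk.
rewrite (count_mem_shuffle hB hcs hj) (count_mem_shuffle hB hcs hk) !nth_shuffle //.
rewrite !eqn_shift ?(letter_at_lt hB hcs) ?(letter_at_lt hB' hcs') //.
rewrite !ltn_shift ?(letter_at_lt hB hcs) ?(letter_at_lt hB' hcs') //.
case: (eqVneq (nth 0 cs j) (nth 0 cs k)) => [e|//].
have rj := rank_at_lt hcs hj; have rk := rank_at_lt hcs hk.
rewrite /letter_at -e in rj rk *.
have [_ R] := hR _ (allP hall _ (mem_nth 0 hj)).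
have [E L] := R _ _ rj rk.
by rewrite /= ltnn E; split=> // lj lk; rewrite L.
Qed.

Lemma cop_requiv r f us us' : rinvariant r f -> size us' = size us ->
  (forall i, i < size us -> requiv r (nth [::] us i) (nth [::] us' i)) ->
  cop f us = cop f us'.
Proof.
move=> [_ Hf] hs hR.
have en : sumn (map size us') = sumn (map size us).
  congr sumn; apply: (@eq_from_nth _ 0); rewrite !size_map // => i hi.
  have hi' : i < size us by rewrite -hs.
  by rewrite !(nth_map [::]) // ?hs //; case: (hR i hi').
rewrite !copE hs en; apply: eq_big => [c|c hc].
  by apply: eq_forallb => i; case: (hR i (ltn_ord i)) => ->.
apply: Hf; apply: requiv_shuffle => //.
- by rewrite size_map size_tuple.
- split=> [|i hi]; first by apply/allP => x /mapP [y _ ->] /=.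
  by have := forallP hc (Ordinal hi); rewrite count_map => /eqP <-.
- by move=> i _; rewrite ltnS sumn_nth_leq.
- by move=> i _; rewrite ltnS sumn_nth_leq.
Qed.

Lemma cop_eq0 f us N : (forall w, N < size w -> f w = 0%R) ->
  N < sumn (map size us) -> cop f us = 0%R.
Proof. by move=> HN hN; rewrite copE big1 // => c _; rewrite HN ?size_mkseq. Qed.

Lemma In_mem (T : eqType) (x : T) s : List.In x s <-> x \in s.
Proof.
elim: s => [|y s IH] //=; rewrite in_cons; split.
  by case=> [->|/IH ->]; rewrite ?eqxx ?orbT.
by case/orP => [/eqP ->|/IH]; [left|right].
Qed.

Lemma mem_bigcup_seq n (x : 'I_n) (s : seq {set 'I_n}) :
  (x \in \bigcup_(B <- s) B) = has (fun B : {set 'I_n} => x \in B) s.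
Proof. by elim: s => [|B s IH]; rewrite ?big_nil ?inE // big_cons in_setU IH. Qed.

Lemma Mser_eq1 n (Phi : seq {set 'I_n}) Pi w :
  Mser Phi Pi w = 1%R <->
  [/\ size w = n,
      forall j k : 'I_n, (nth 0 w j == nth 0 w k) = same_block Phi Pi j k
    & forall (j k : 'I_n) (p q : 'I_(size Phi)), p < q ->
        j \in nth set0 Phi p -> k \in nth set0 Phi q -> nth 0 w j < nth 0 w k].
Proof.
rewrite /Mser; case: ifP => [/andP [/eqP hw /forallP H] | hF]; split=> //.
- move=> _; split=> // [j k | j k p q pq jp kq].
  + by have /andP [/eqP -> _] := forallP (H j) k.
  + have /andP [_ /forallP O] := forallP (H j) k.
    by apply: (implyP (forallP (O p) q)); rewrite pq jp kq.
- move=> [hw E O]; exfalso; move/negbT/negP: hF; apply; rewrite hw eqxx /=.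
  apply/forallP => j; apply/forallP => k; rewrite E eqxx /=.
  apply/forallP => p; apply/forallP => q; apply/implyP => /and3P [pq jp kq].
  exact: (O j k p q).
Qed.

Lemma Mser_eq01 n (Phi : seq {set 'I_n}) Pi w : Mser Phi Pi w = 1%R \/ Mser Phi Pi w = 0%R.
Proof. by rewrite /Mser; case: ifP; [left|right]. Qed.

Section Basis.

Variables (r n : nat) (t : seq nat).

Definition level v : {set 'I_n} := [set j : 'I_n | nth 0 t j == v].

(* The letters of [t] are at most [sumn t]. *)
Definition frequent := [seq v <- iota 0 (sumn t).+1 | r <= count_mem v t].

Definition rcomp_of := map level frequent.

Definition rpart_of : {set {set 'I_n}} :=
  [set level (nth 0 t j) | j : 'I_n in [pred j : 'I_n | count_mem (nth 0 t j) t < r]].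

Lemma card_level v : size t = n -> #|level v| = count_mem v t.
Proof.
move=> ht; rewrite count_mem_iota ht cardsE cardE /enum_mem size_filter -enumT.
by rewrite -val_enum_ord count_map.
Qed.

Lemma disjoint_level v v' : v != v' -> [disjoint level v & level v'].
Proof.
move=> ne; rewrite disjoint_subset; apply/subsetP => x; rewrite inE => /eqP e.
by rewrite !inE e.
Qed.

Lemma mem_frequent v : (v \in frequent) = (v <= sumn t) && (r <= count_mem v t).
Proof. by rewrite mem_filter mem_iota andbC. Qed.

Lemma nth_mem_frequent j : (nth 0 t j \in frequent) = (r <= count_mem (nth 0 t j) t).
Proof. by rewrite mem_frequent nth_leq_sumn. Qed.

Lemma sorted_frequent : sorted ltn frequent.
Proof. by apply: sorted_filter; [exact: ltn_trans | exact: iota_ltn_sorted]. Qed.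

Lemma nth_frequent_ltn p q : p < q -> q < size frequent ->
  nth 0 frequent p < nth 0 frequent q.
Proof.
move=> pq hq; apply: (sorted_ltn_nth ltn_trans 0 sorted_frequent) => //.
exact: ltn_trans hq.
Qed.

Lemma index_frequent_ltn x y : x \in frequent -> y \in frequent -> x < y ->
  index x frequent < index y frequent.
Proof.
have le_sorted : sorted leq frequent by apply: sub_sorted sorted_frequent => a b /ltnW.
move=> hx hy xy; rewrite ltnNge; apply: contraTN xy => le; rewrite -leqNgt.
exact: (sorted_leq_index leq_trans leqnn le_sorted y x hy hx le).
Qed.

Lemma nth_frequent_count_mem p : p < size frequent -> r <= count_mem (nth 0 frequent p) t.
Proof. by move/(mem_nth 0); rewrite mem_frequent => /andP []. Qed.

Lemma mem_nth_rcomp_of (j : 'I_n) p : p < size frequent ->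
  (j \in nth set0 rcomp_of p) = (nth 0 t j == nth 0 frequent p).
Proof. by move=> hp; rewrite (nth_map 0) // inE. Qed.

Lemma mem_cover_rcomp_of (j : 'I_n) :
  (j \in \bigcup_(B <- rcomp_of) B) = (r <= count_mem (nth 0 t j) t).
Proof.
rewrite mem_bigcup_seq has_map -nth_mem_frequent; apply/hasP/idP.
  by case=> v hv; rewrite /= inE => /eqP ->.
by move=> h; exists (nth 0 t j) => //; rewrite /= inE.
Qed.

Lemma same_block_of (j k : 'I_n) :
  same_block rcomp_of rpart_of j k = (nth 0 t j == nth 0 t k).
Proof.
apply/idP/idP.
- case/orP => [/hasP [B /mapP [v _ ->]] | /existsP [B /andP [/imsetP [l _ ->]]]];
    by rewrite !inE => /andP [/eqP -> /eqP ->].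
- move/eqP=> e; case: (leqP r (count_mem (nth 0 t j) t)) => hl; apply/orP.
  + left; apply/hasP; exists (level (nth 0 t j)); last by rewrite !inE e eqxx.
    by apply: map_f; rewrite nth_mem_frequent.
  + right; apply/existsP; exists (level (nth 0 t j)).
    by rewrite imset_f ?inE // e eqxx.
Qed.

Lemma r_setcomp_of : 0 < r -> size t = n -> r_setcomp r rcomp_of rpart_of.
Proof.
move=> r0 ht; split.
- split=> //.
  + move=> B /In_mem /mapP [v hv ->]; rewrite -card_gt0 card_level //.
    by move: hv; rewrite mem_frequent => /andP [_]; exact: leq_trans.
  + move=> i j /andP [ij hj]; rewrite size_map in hj.
    rewrite !(nth_map 0) ?(ltn_trans ij) //; apply: disjoint_level.
    by rewrite ltn_eqF // nth_frequent_ltn.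
- move=> B /In_mem /mapP [v hv ->]; rewrite card_level //.
  by move: hv; rewrite mem_frequent => /andP [].
- apply/and3P; split.
  + apply/eqP/setP => x; rewrite inE mem_cover_rcomp_of -ltnNge.
    apply/bigcupP/idP => [[B /imsetP [l hl ->]]|h].
      by rewrite inE => /eqP e; move: hl; rewrite inE -e.
    by exists (level (nth 0 t x)); rewrite ?inE // imset_f ?inE.
  + apply/trivIsetP => B1 B2 /imsetP [l1 _ ->] /imsetP [l2 _ ->] ne.
    by apply: disjoint_level; apply: contraNneq ne => ->.
  + apply/negP => /imsetP [l _ e].
    have : l \in level (nth 0 t l) by rewrite inE.
    by rewrite -e inE.
- by move=> B /imsetP [l hl ->]; rewrite card_level //; move: hl; rewrite inE.
Qed.

Lemma Mser_of_requiv w : size t = n -> requiv r w t -> Mser rcomp_of rpart_of w = 1%R.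
Proof.
move=> ht H; have [es B] := H; have hw : size w = n by rewrite es.
apply/Mser_eq1; split=> // [j k | j k p q pq].
  by rewrite same_block_of (requiv_eq_pattern H) ?hw.
have hp : p < size frequent by rewrite -(size_map level).
have hq : q < size frequent by rewrite -(size_map level).
rewrite !mem_nth_rcomp_of // => /eqP jp /eqP kq.
have hj : j < size w by rewrite hw.
have hk : k < size w by rewrite hw.
have [_ ->] := B j k hj hk; last 2 first.
- by rewrite (requiv_count_mem H hj) jp nth_frequent_count_mem.
- by rewrite (requiv_count_mem H hk) kq nth_frequent_count_mem.
by rewrite jp kq nth_frequent_ltn.
Qed.

Lemma requiv_of_Mser w : size t = n -> Mser rcomp_of rpart_of w = 1%R -> requiv r w t.
Proof.
move=> ht /Mser_eq1 [hw E O].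
have pat : eq_pattern w t.
  move=> j k; rewrite hw => hj hk.
  by rewrite (E (Ordinal hj) (Ordinal hk)) same_block_of.
have es : size w = size t by rewrite hw.
have ord j k : j < size w -> k < size w ->
    r <= count_mem (nth 0 t j) t -> r <= count_mem (nth 0 t k) t ->
    nth 0 t j < nth 0 t k -> nth 0 w j < nth 0 w k.
  rewrite hw => hj hk lj lk tjk; rewrite -!nth_mem_frequent in lj lk.
  have hp : index (nth 0 t j) frequent < size rcomp_of by rewrite size_map index_mem.
  have hq : index (nth 0 t k) frequent < size rcomp_of by rewrite size_map index_mem.
  apply: (O (Ordinal hj) (Ordinal hk) (Ordinal hp) (Ordinal hq)).
  - exact: index_frequent_ltn.
  - by rewrite mem_nth_rcomp_of -?(size_map level) // nth_index.
  - by rewrite mem_nth_rcomp_of -?(size_map level) // nth_index.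
split=> // j k hj hk; split; first exact: pat.
rewrite (eq_pattern_count_mem es pat hj) (eq_pattern_count_mem es pat hk) => lj lk.
case: (ltngtP (nth 0 t j) (nth 0 t k)) => h.
- by rewrite ord.
- by apply/negbTE; rewrite -leqNgt ltnW // ord.
- have /eqP -> : nth 0 w j == nth 0 w k by rewrite pat // h.
  exact: ltnn.
Qed.

End Basis.

Lemma Mser_eq1_count_mem r n (Phi : seq {set 'I_n}) Pi w (j : 'I_n) (p : 'I_(size Phi)) :
  r <= #|nth set0 Phi p| -> Mser Phi Pi w = 1%R -> j \in nth set0 Phi p ->
  r <= count_mem (nth 0 w j) w.
Proof.
move=> hB /Mser_eq1 [hw E _] jp; rewrite -(card_level _ hw).
apply: leq_trans hB (subset_leq_card _); apply/subsetP => x hx.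
rewrite inE eq_sym E; apply/orP; left; apply/hasP.
by exists (nth set0 Phi p); [exact: mem_nth | rewrite jp hx].
Qed.

Section MserInvariance.

Variables (r n : nat) (Phi : seq {set 'I_n}) (Pi : {set {set 'I_n}}).
Hypothesis hPhi : forall B, B \in Phi -> r <= #|B|.

Lemma Mser_requiv_eq1 w t : requiv r w t -> Mser Phi Pi w = 1%R -> Mser Phi Pi t = 1%R.
Proof.
move=> H Hw; have /Mser_eq1 [hw E O] := Hw; have [es B] := H.
have hj (j : 'I_n) : j < size w by rewrite hw.
apply/Mser_eq1; split=> [|j k|j k p q pq jp kq]; first by rewrite -es.
  by rewrite -(requiv_eq_pattern H (hj j) (hj k)) E.
have [_ <-] := B j k (hj j) (hj k); first exact: O pq jp kq.
- exact: Mser_eq1_count_mem (hPhi (mem_nth set0 (ltn_ord p))) Hw jp.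
- exact: Mser_eq1_count_mem (hPhi (mem_nth set0 (ltn_ord q))) Hw kq.
Qed.

Lemma Mser_requiv w t : requiv r w t -> Mser Phi Pi w = Mser Phi Pi t.
Proof.
move=> H; case: (Mser_eq01 Phi Pi w) => e; first by rewrite e (Mser_requiv_eq1 H e).
case: (Mser_eq01 Phi Pi t) => e'; first by rewrite e' (Mser_requiv_eq1 (requiv_sym H) e').
by rewrite e e'.
Qed.

End MserInvariance.

Section ClassDecomposition.

Local Open Scope ring_scope.

Variables (F : numFieldType) (T : eqType) (eqv : T -> T -> Prop).
Hypothesis eqv_sym : forall x y, eqv x y -> eqv y x.
Hypothesis eqv_trans : forall x y z, eqv x y -> eqv y z -> eqv x z.
Variables (L : seq T) (ind : T -> T -> F).
Hypothesis ind01 : forall t w, t \in L -> ind t w = 1 \/ ind t w = 0.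
Hypothesis indP : forall t w, t \in L -> ind t w = 1 <-> eqv w t.

Let eq01 (a b : F) : (a = 1 \/ a = 0) -> (b = 1 \/ b = 0) -> (a = 1 <-> b = 1) -> a = b.
Proof.
move=> [] -> [] -> [h1 h2] //; [move: (h1 erefl) | move: (h2 erefl)];
  by move/esym/eqP; rewrite oner_eq0.
Qed.

Lemma ind_eqv t t' u : t \in L -> t' \in L -> eqv t t' -> ind t u = ind t' u.
Proof.
move=> tL t'L Rtt'; apply: eq01; [exact: ind01 | exact: ind01 |].
rewrite !indP //; split=> h; [exact: eqv_trans h Rtt' | exact: eqv_trans h (eqv_sym Rtt')].
Qed.

(* A class meeting [L] is met [\sum_(t' <- L) ind t t'] times, whence the weights. *)
Lemma class_decomposition (phi : T -> F) w :
  (forall w t, eqv w t -> phi w = phi t) -> (exists2 t0, t0 \in L & eqv t0 w) ->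
  phi w = \sum_(t <- L) phi t * (ind t w / \sum_(t' <- L) ind t t').
Proof.
move=> Hphi [t0 t0L Rt0w]; set c := \sum_(t' <- L) ind t0 t'.
have term t : t \in L -> phi t * (ind t w / \sum_(t' <- L) ind t t') = phi w / c * ind t w.
  move=> tL; case: (ind01 w tL) => e; last by rewrite e mul0r !mulr0.
  have Rwt : eqv w t := (indP w tL).1 e.
  rewrite e mulr1 mul1r -(Hphi _ _ Rwt); congr (_ / _).
  by apply: eq_big_seq => t' t'L; apply: ind_eqv => //; apply: eqv_sym (eqv_trans Rt0w Rwt).
rewrite (eq_big_seq _ term) -big_distrr /=.
have -> : \sum_(t <- L) ind t w = c.
  apply: eq_big_seq => t tL; apply: eq01; [exact: ind01 | exact: ind01 |].
  rewrite !indP //; split=> h; first exact: eqv_sym (eqv_trans Rt0w h).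
  exact: eqv_sym (eqv_trans h Rt0w).
have ind_ge0 t' : 0 <= ind t0 t' by case: (ind01 t' t0L) => ->.
rewrite divfK // psumr_neq0 //; apply/hasP; exists t0 => //.
by rewrite (indP t0 t0L).2 ?ltr01 //; exact: eqv_trans Rt0w (eqv_sym Rt0w).
Qed.

End ClassDecomposition.

Definition dense_rank (w : seq nat) x := size (undup [seq y <- w | y < x]).

Definition normalize (w : seq nat) := map (dense_rank w) w.

Lemma dense_rank_lt w x : x \in w -> dense_rank w x < size w.
Proof.
move=> xw; apply: leq_ltn_trans (size_undup _) _.
rewrite size_filter -(count_predC (fun y => y < x) w) -[X in X < _]addn0 ltn_add2l.
by rewrite -has_count; apply/hasP; exists x; rewrite //= ltnn.
Qed.

Lemma dense_rank_mono w x y : x \in w -> x < y -> dense_rank w x < dense_rank w y.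
Proof.
move=> xw xy; have U : uniq (x :: undup [seq z <- w | z < x]).
  by rewrite /= undup_uniq andbT mem_undup mem_filter ltnn.
apply: (uniq_leq_size U) => z; rewrite in_cons mem_undup mem_filter.
case/orP => [/eqP ->|/andP [zx zw]]; rewrite mem_undup mem_filter ?xy ?xw //.
by rewrite zw (ltn_trans zx xy).
Qed.

Lemma dense_rank_cmp w x y : x \in w -> y \in w ->
  ((dense_rank w x < dense_rank w y) = (x < y)) /\
  ((dense_rank w x == dense_rank w y) = (x == y)).
Proof.
move=> xw yw; case: (ltngtP x y) => [h|h|->]; last by rewrite ltnn eqxx.
- by have h' := dense_rank_mono xw h; rewrite h' ltn_eqF.
- by have h' := dense_rank_mono yw h; rewrite gtn_eqF // ltnNge ltnW.
Qed.

Lemma requiv_normalize r w : requiv r (normalize w) w.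
Proof.
split; first by rewrite size_map.
rewrite size_map => j k hj hk; rewrite !(nth_map 0) //.
have [-> ->] := dense_rank_cmp (mem_nth 0 hj) (mem_nth 0 hk); by split.
Qed.

Fixpoint words (n k : nat) : seq (seq nat) :=
  if n is n'.+1 then [seq a :: s | a <- iota 0 k, s <- words n' k] else [:: [::]].

Lemma size_words n k s : s \in words n k -> size s = n.
Proof.
elim: n s => [|n IH] s /=; first by rewrite mem_seq1 => /eqP ->.
by case/allpairsP => [[a s'] [_ hs ->]] /=; rewrite (IH _ hs).
Qed.

Lemma mem_words n k s : size s = n -> all (gtn k) s -> s \in words n k.
Proof.
elim: n s => [|n IH] [|a s] //= [hs] /andP [ha hal].
by apply: (allpairs_f (fun a s => a :: s)); [rewrite mem_iota | exact: IH].
Qed.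

Lemma normalize_in_words w : normalize w \in words (size w) (size w).
Proof.
apply: mem_words; first by rewrite size_map.
by apply/allP => a /mapP [x xw ->]; exact: dense_rank_lt.
Qed.

Lemma Mser_of_eq1 r n t w : size t = n ->
  Mser (rcomp_of r n t) (rpart_of r n t) w = 1%R <-> requiv r w t.
Proof. by move=> ht; split; [exact: requiv_of_Mser | exact: Mser_of_requiv]. Qed.

Lemma hom_size n f w : size w = n -> Defs.hom n f w = f w.
Proof. by rewrite /Defs.hom => ->; rewrite eqxx. Qed.

Lemma NCQSymr_rinvariant r f : in_NCQSymr r f -> rinvariant r f.
Proof.
move=> [bf H]; split=> // w t Rwt; have [es _] := Rwt.
have [c [Hc E]] := H (size w).
rewrite -(hom_size f (erefl (size w))) -(hom_size f (esym es)) !E.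
apply: eq_big_seq => p /In_mem/Hc [_ hB _ _]; congr (_ * _)%R.
by apply: Mser_requiv Rwt => B /In_mem; exact: hB.
Qed.

Lemma rinvariant_NCQSymr r f : 0 < r -> rinvariant r f -> in_NCQSymr r f.
Proof.
move=> r0 [bf Hf]; split=> // n.
pose ind t w := Mser (rcomp_of r n t) (rpart_of r n t) w.
exists [seq ((rcomp_of r n t, rpart_of r n t), f t / \sum_(t' <- words n n) ind t t')%R
       | t <- words n n].
split=> [p /In_mem /mapP [t ht ->] | w]; first exact: r_setcomp_of r0 (size_words ht).
rewrite big_map /Defs.hom; case: eqP => hw; last first.
  have /negbTE hw' : size w != n by apply/eqP.
  by rewrite big1 // => t _; rewrite /Mser hw' mulr0.
rewrite (@class_decomposition _ _ _ (@requiv_sym r) (@requiv_trans r) (words n n) ind _ _ f w).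
- by apply: eq_bigr => t _; rewrite mulrA mulrAC.
- by move=> t w' _; exact: Mser_eq01.
- by move=> t w' /size_words; exact: Mser_of_eq1.
- exact: Hf.
- exists (normalize w); last exact: requiv_normalize.
  by rewrite -hw normalize_in_words.
Qed.

Lemma mem_setcomp n (Phi : seq {set 'I_n}) (j : 'I_n) : is_setcomp [set: 'I_n] Phi ->
  exists2 p, p < size Phi & j \in nth set0 Phi p.
Proof.
case=> _ U _; have : j \in \bigcup_(B <- Phi) B by rewrite U inE.
rewrite mem_bigcup_seq => /hasP [B hB jB].
by exists (index B Phi); rewrite ?index_mem ?nth_index.
Qed.

Lemma rinvariant_NCQSym r f : rinvariant r f -> in_NCQSym f.
Proof.
move=> [bf Hf]; split=> // n Phi hP w w' hw hw' Cw Cw'; apply: Hf.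
split=> [|j k]; first by rewrite hw hw'.
rewrite hw => hj hk.
have [p hp jp] := mem_setcomp (Ordinal hj) hP.
have [q hq kq] := mem_setcomp (Ordinal hk) hP.
have [e1 l1] := Cw _ _ _ _ hp hq jp kq; have [e2 l2] := Cw' _ _ _ _ hp hq jp kq.
have [_ l1'] := Cw _ _ _ _ hq hp kq jp; have [_ l2'] := Cw' _ _ _ _ hq hp kq jp.
rewrite /= in e1 l1 e2 l2 l1' l2'.
case: (ltngtP p q) => h.
- by rewrite (ltn_eqF (l1 h)) (ltn_eqF (l2 h)) (l1 h) (l2 h).
- rewrite (gtn_eqF (l1' h)) (gtn_eqF (l2' h)).
  by rewrite ltnNge (ltnW (l1' h)) ltnNge (ltnW (l2' h)).
- by rewrite (e1 h) (e2 h) !eqxx !ltnn.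
Qed.

Lemma rinvariant_one r : rinvariant r one_s.
Proof.
split; first by exists 0 => [[|a w]].
by move=> [|a w] [|b t] [].
Qed.

Lemma rinvariant_mul r f g : rinvariant r f -> rinvariant r g -> rinvariant r (mul_s f g).
Proof.
move=> [[Nf Bf] Hf] [[Ng Bg] Hg]; split.
  exists (Nf + Ng) => w hw; rewrite /mul_s big1 // => i _.
  have hi : i <= size w by rewrite -ltnS.
  case: (leqP i Nf) => h; first by rewrite (Bg (drop i w)) ?mulr0 // size_drop; lia.
  by rewrite (Bf (take i w)) ?mul0r // size_takel.
move=> w t H; have [es _] := H; rewrite /mul_s -es; apply: eq_bigr => i _.
by rewrite (Hf _ _ (requiv_take i H)) (Hg _ _ (requiv_drop i H)).
Qed.

Lemma rinvariant_antipode r f : rinvariant r f -> rinvariant r (antipode f).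
Proof.
move=> Pf; have [[N HN] _] := Pf; split.
  exists N => [[|x w]] hs //=; rewrite big1 // => b _.
  rewrite (cop_eq0 HN) ?mulr0 // -/(shape _) -size_flatten flatten_cuts //.
  by rewrite size_tuple.
move=> [|x w] [|y v] H; have [//= [es] _] := H; rewrite /= es; apply: eq_bigr => b _.
have hb : size b = size v by rewrite size_tuple.
have hb' : size b = size w by rewrite hb es.
have sh := shape_cuts x y hb' (esym es).
have ssh : size (cuts y v b) = size (cuts x w b) by have := congr1 size sh; rewrite !size_map.
rewrite ssh (cop_requiv Pf ssh) // => i _; apply: requiv_nth_flatten sh _.
by rewrite !flatten_cuts.
Qed.

Definition class_ind r (t w : seq nat) : rat :=
  Mser (rcomp_of r (size t) t) (rpart_of r (size t) t) w.

Lemma class_ind_eq0 r t w : size t != size w -> class_ind r t w = 0%R.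
Proof.
move=> ne; rewrite /class_ind.
case: (Mser_eq01 (rcomp_of r (size t) t) (rpart_of r (size t) t) w) => // /Mser_eq1 [e _ _].
by rewrite e eqxx in ne.
Qed.

Lemma rinvariant_class_ind r t : rinvariant r (class_ind r t).
Proof.
split; first by exists (size t) => w hw; rewrite class_ind_eq0 // neq_ltn hw.
move=> w w' H; apply: Mser_requiv H => B /mapP [v hv ->].
by rewrite card_level //; move: hv; rewrite mem_frequent => /andP [].
Qed.

Lemma rinvariant_scale r (a : rat) f : rinvariant r f -> rinvariant r (fun w => a * f w)%R.
Proof.
move=> [[N HN] Hf]; split; first by exists N => w hw; rewrite HN ?mulr0.
by move=> w t H; rewrite (Hf _ _ H).
Qed.

Lemma In_map (A B : Type) (f : A -> B) s y : List.In y (map f s) -> exists x, y = f x.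
Proof. by elim: s => [|a s IH] //= [<-|/IH]; [exists a|]. Qed.

Definition short_words N := flatten [seq words m m | m <- iota 0 N.+1].

Lemma decompose_class_ind r N (phi : seq nat -> rat) w : size w <= N ->
  (forall w t, requiv r w t -> phi w = phi t) ->
  phi w = (\sum_(t <- short_words N)
             phi t * (class_ind r t w / \sum_(t' <- short_words N) class_ind r t t'))%R.
Proof.
move=> hw Hphi.
apply: (@class_decomposition _ _ _ (@requiv_sym r) (@requiv_trans r) (short_words N)).
- by move=> t w' _; exact: Mser_eq01.
- by move=> t w' _; exact: Mser_of_eq1.
- exact: Hphi.
- exists (normalize w); last exact: requiv_normalize.
  by apply/flatten_mapP; exists (size w); rewrite ?mem_iota ?normalize_in_words.
Qed.

Lemma rinvariant2_tensor r N (F : seq nat -> seq nat -> rat) : 0 < r ->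
  (forall u v, N < size u + size v -> F u v = 0%R) ->
  (forall u u' v v', requiv r u u' -> requiv r v v' -> F u v = F u' v') ->
  in_tensor2 (in_NCQSymr r) F.
Proof.
move=> r0 F0 F_requiv; set L := short_words N.
pose c t := (\sum_(t' <- L) class_ind r t t')%R.
exists [seq ((fun u => F t.1 t.2 / c t.1 / c t.2 * class_ind r t.1 u)%R, class_ind r t.2)
       | t <- [seq (t1, t2) | t1 <- L, t2 <- L]].
split=> [p hp | u v].
  have [t ->] := In_map hp; split; apply: rinvariant_NCQSymr => //.
  - exact/rinvariant_scale/rinvariant_class_ind.
  - exact: rinvariant_class_ind.
rewrite big_map big_allpairs /=.
have [small|large] := leqP (size u + size v) N; last first.
  rewrite F0 //; symmetry; apply: big1 => t1 _; apply: big1 => t2 _.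
  have [e1|ne1] := eqVneq (size t1) (size u).
    have [e2|ne2] := eqVneq (size t2) (size v); last by rewrite (class_ind_eq0 r ne2) mulr0.
    by rewrite F0 ?e1 ?e2 // !mul0r.
  by rewrite (class_ind_eq0 r ne1) !(mulr0, mul0r).
have hu : size u <= N by exact: leq_trans (leq_addr _ _) small.
have hv : size v <= N by exact: leq_trans (leq_addl _ _) small.
rewrite (@decompose_class_ind r N (F^~ v) u hu) => [|w t H]; last first.
  exact: F_requiv H (requiv_refl r v).
apply: eq_bigr => t1 _.
rewrite (@decompose_class_ind r N (F t1) v hv) => [|w t H]; last first.
  exact: F_requiv (requiv_refl r t1) H.
rewrite big_distrl /=; apply: eq_bigr => t2 _.
ring.
Qed.

Lemma coprod_tensor r f : 0 < r -> rinvariant r f -> in_tensor2 (in_NCQSymr r) (coprod f).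
Proof.
move=> r0 Pf; have [[N HN] _] := Pf.
apply: (@rinvariant2_tensor r N) => // [u v h|u u' v v' Hu Hv].
  by apply: (cop_eq0 HN); rewrite /= addn0.
by apply: cop_requiv Pf _ _ => // [[|[|i]]].
Qed.

Theorem mainTheorem3 (r : nat) : (0 < r)%N ->
  [/\ forall f, in_NCQSymr r f -> in_NCQSym f,
      in_NCQSymr r one_s,
      forall f g, in_NCQSymr r f -> in_NCQSymr r g -> in_NCQSymr r (mul_s f g),
      forall f, in_NCQSymr r f -> in_tensor2 (in_NCQSymr r) (coprod f)
    & forall f, in_NCQSymr r f -> in_NCQSymr r (antipode f)].
Proof.
move=> r0; split.
- by move=> f /NCQSymr_rinvariant /rinvariant_NCQSym.
- exact/rinvariant_NCQSymr/rinvariant_one.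
- move=> f g /NCQSymr_rinvariant hf /NCQSymr_rinvariant hg.
  exact/rinvariant_NCQSymr/rinvariant_mul.
- by move=> f /NCQSymr_rinvariant; exact: coprod_tensor.
- by move=> f /NCQSymr_rinvariant hf; exact/rinvariant_NCQSymr/rinvariant_antipode.
Qed.
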